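(* Let $\mathcal A$ be a von Neumann algebra, $G$ a group of normal $*$-automorphisms of $\mathcal A$, and $\varphi$ a faithful $G$-strongly quasi invariant state on $\mathcal A$ with cocycles $(x_g)_{g\in G}$. If $x_g\in\mathcal F(G)$ for some $g\in G$, then $x_g=\mathbf 1$.
   Context: $\varphi$ is $G$-strongly quasi invariant if $\varphi$ is a faithful normal state and for every $g\in G$ there is a self-adjoint $x_g\in\mathcal A$ with $\varphi(g(a))=\varphi(x_ga)$ for all $a\in\mathcal A$. $\mathcal F(G)=\{a\in\mathcal A:h(a)=a\ \forall h\in G\}$. *)

(* Algebraic framework for Lemma 2.11: a unital complex
   *-algebra (any von Neumann algebra is one), states, faithfulness,
   *-automorphisms, groups of them, strong quasi-invariance, fixed points. *)
From HB Require Import structures.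
From mathcomp Require Import all_boot all_order all_algebra.
Set Implicit Arguments. Unset Strict Implicit. Unset Printing Implicit Defensive.
Import Order.TTheory GRing.Theory Num.Theory.
Local Open Scope ring_scope.

Section StarAlg.
Variables (C : numClosedFieldType) (A : algType C).

Definition star_involution (st : A -> A) : Prop :=
  [/\ forall a b, st (a + b) = st a + st b,
      forall (c : C) a, st (c *: a) = c^* *: st a,
      forall a b, st (a * b) = st b * st a
    & forall a, st (st a) = a].

Definition is_state (st : A -> A) (phi : A -> C) : Prop :=
  [/\ forall (c : C) a b, phi (c *: a + b) = c * phi a + phi b,
      forall a, 0 <= phi (st a * a)
    & phi 1 = 1].

Definition faithful (st : A -> A) (phi : A -> C) : Prop :=
  forall a, phi (st a * a) = 0 -> a = 0.

Definition star_automorphism (st : A -> A) (g : A -> A) : Prop :=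
  [/\ bijective g,
      forall (c : C) a b, g (c *: a + b) = c *: g a + g b,
      forall a b, g (a * b) = g a * g b,
      g 1 = 1
    & forall a, g (st a) = st (g a)].

Definition automorphism_group (st : A -> A) (G : (A -> A) -> Prop) : Prop :=
  [/\ forall g, G g -> star_automorphism st g,
      G id,
      forall g h, G g -> G h -> G (g \o h)
    & forall g, G g -> exists2 h, G h & cancel g h /\ cancel h g].

Definition strongly_quasi_invariant_with (st : A -> A) (G : (A -> A) -> Prop)
    (phi : A -> C) (x : (A -> A) -> A) : Prop :=
  [/\ is_state st phi, faithful st phi
    & forall g, G g -> st (x g) = x g /\ forall a, phi (g a) = phi (x g * a)].

Definition fixed_points (G : (A -> A) -> Prop) (a : A) : Prop :=
  forall h, G h -> h a = a.

End StarAlg.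

(* Since g 1 = 1 and g fixes x_g, the cocycle identity gives
   phi (x_g) = phi (g 1) = 1 and phi (x_g * x_g) = phi (g x_g) = phi (x_g) = 1.
   Hence phi ((x_g - 1)^* (x_g - 1)) = phi (x_g^2) - 2 phi (x_g) + 1 = 0, and
   faithfulness forces x_g = 1. *)
From HB Require Import structures.
From mathcomp Require Import all_boot all_order all_algebra.
Set Implicit Arguments. Unset Strict Implicit. Unset Printing Implicit Defensive.
Import Order.TTheory GRing.Theory Num.Theory.
Local Open Scope ring_scope.

Section FaithfulState.
Variables (C : numClosedFieldType) (A : algType C) (st : A -> A) (phi : A -> C).
Hypothesis st_inv : star_involution st.

Lemma star1 : st 1 = 1.
Proof.
have [_ _ stM stK] := st_inv.
by have := stM (st 1) 1; rewrite mulr1 stK mulr1.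
Qed.

Lemma starB a b : st (a - b) = st a - st b.
Proof.
have [stD stZ _ _] := st_inv.
by rewrite -scaleN1r stD stZ conjCN1 scaleN1r.
Qed.

Lemma stateB : is_state st phi -> forall a b, phi (a - b) = phi a - phi b.
Proof.
by case=> phiL _ _ a b; rewrite addrC -scaleN1r phiL mulN1r addrC.
Qed.

Lemma faithful_state_eq1 (y : A) :
    is_state st phi -> faithful st phi ->
  st y = y -> phi y = 1 -> phi (y * y) = 1 -> y = 1.
Proof.
move=> phi_state phi_faithful sty phiy phiyy.
apply/eqP; rewrite -subr_eq0; apply/eqP/phi_faithful.
rewrite starB star1 sty mulrBl !mulrBr !mulr1 mul1r.
by rewrite !(stateB phi_state) phiyy phiy; case: phi_state => _ _ ->; rewrite !subrr.
Qed.

End FaithfulState.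

Theorem lemma2p11 (C : numClosedFieldType) (A : algType C) (st : A -> A)
    (G : (A -> A) -> Prop) (phi : A -> C) (x : (A -> A) -> A) :
  star_involution st ->
  automorphism_group st G ->
  strongly_quasi_invariant_with st G phi x ->
  forall g, G g -> fixed_points G (x g) -> x g = 1.
Proof.
move=> st_inv [Gaut _ _ _] [phi_state phi_faithful cocycle] g Gg xg_fixed.
have [_ _ _ g1 _] := Gaut g Gg.
have [st_xg phi_g] := cocycle g Gg.
have phi_xg : phi (x g) = 1.
  by rewrite -[x g]mulr1 -phi_g g1; case: phi_state.
have phi_xg2 : phi (x g * x g) = 1 by rewrite -phi_g xg_fixed.
exact: (faithful_state_eq1 st_inv phi_state phi_faithful st_xg phi_xg phi_xg2).
Qed.
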